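(* $\psi_{d,\min}(\mathrm{KG}(6,2))=3$.
   Context: $\mathrm{KG}(6,2)$ is the Kneser graph whose vertices are the $2$-element subsets of $\{1,\dots,6\}$, two being adjacent iff disjoint. For a digraph $D$, let $N_+[v]=\{v\}\cup\{u:(v,u)\in E(D)\}$ and for a coloring $c$, $c(U)=\{c(u):u\in U\}$. The directed local chromatic number is $\psi_d(D)=\min_c\max_{v\in V(D)}|c(N_+[v])|$, the minimum over proper colorings $c$ of the underlying undirected graph. For an undirected graph $G$, $\psi_{d,\min}(G)$ is the minimum of $\psi_d(\vec G)$ over all orientations $\vec G$ of $G$ (each edge given exactly one direction). *)

From mathcomp Require Import all_boot.
Set Implicit Arguments. Unset Strict Implicit. Unset Printing Implicit Defensive.

(* Kneser graph KG(n,k): vertices are k-subsets of {1..n} (here 'I_n), adjacent iff disjoint. *)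
Definition KGvert (n k : nat) := {A : {set 'I_n} | #|A| == k}.

Definition KGadj (n k : nat) (u v : KGvert n k) : bool :=
  [disjoint (val u) & (val v)].

Definition is_orientation (T : finType) (adj : rel T) (o : rel T) : Prop :=
  (forall u v, o u v -> adj u v) /\
  (forall u v, adj u v -> (o u v (+) o v u)).

Definition proper_coloring (T : finType) (adj : rel T) (c : T -> nat) : Prop :=
  forall u v, adj u v -> c u <> c v.

Definition out_closed_nbhd (T : finType) (o : rel T) (v : T) : {set T} :=
  v |: [set u | o v u].

Definition ncolors_out (T : finType) (o : rel T) (c : T -> nat) (v : T) : nat :=
  size (undup [seq c u | u <- enum (out_closed_nbhd o v)]).

(* The directed local chromatic number of the digraph o (whose underlying
   graph is adj):  psi_d = min over proper colorings c of max_v |c(N_+[v])|. *)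
Definition psi_d (T : finType) (adj : rel T) (o : rel T) (m : nat) : Prop :=
  (exists c, proper_coloring adj c /\ forall v, ncolors_out o c v <= m) /\
  (forall c, proper_coloring adj c -> exists v, m <= ncolors_out o c v).

Definition psi_d_min (T : finType) (adj : rel T) (m : nat) : Prop :=
  (exists o, is_orientation adj o /\ psi_d adj o m) /\
  (forall o m', is_orientation adj o -> psi_d adj o m' -> m <= m').

From mathcomp Require Import all_boot.
From mathcomp Require Import zify.
Set Implicit Arguments. Unset Strict Implicit. Unset Printing Implicit Defensive.

(* Upper bound: colour KG(6,2) with four colours, colour [min A] for [A] meeting
   {0,1,2} and colour 3 for the three pairs inside {3,4,5}, and orient every edge
   along a tournament on the colours in which each colour beats at most two
   others; every closed out-neighbourhood then sees at most three colours.
   Lower bound: if every closed out-neighbourhood saw at most two colours, all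
   out-neighbours of a vertex would share a colour, so out-neighbourhoods that
   meet have an independent union.  The neighbourhood of a pair is a perfect
   matching on the six pairs of the remaining four points, so out-degrees are at
   most 3; as KG(6,2) is 6-regular they are all exactly 3.  An exhaustive search
   over such assignments of out-neighbourhoods shows that none is consistent. *)


Section Independence.
Variables (T : eqType) (adj : rel T).

Definition independent (s : seq T) := all (fun x => all (fun y => ~~ adj x y) s) s.

Lemma independentP s :
  reflect {in s &, forall x y, ~~ adj x y} (independent s).
Proof.
apply: (iffP allP) => [h x y xs ys | h x xs]; first exact: (allP (h x xs)).
by apply/allP => y; apply: h.
Qed.

Lemma independent_subseq s t : subseq t s -> independent s -> independent t.
Proof.
move=> /mem_subseq sub_ts /independentP h; apply/independentP => x y xt yt.
by apply: h; apply: sub_ts.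
Qed.

Fixpoint ksubseqs k (s : seq T) : seq (seq T) :=
  match k, s with
  | 0, _ => [:: [::]]
  | _.+1, [::] => [::]
  | k'.+1, x :: s' => map (cons x) (ksubseqs k' s') ++ ksubseqs k s'
  end.

Lemma mem_ksubseqs s t : subseq t s -> t \in ksubseqs (size t) s.
Proof.
elim: s t => [|x s IH] [|y t] //=; rewrite ?mem_seq1 //.
rewrite mem_cat; case: eqP => [-> /IH tin | _ sub]; first by rewrite map_f.
by rewrite (IH (y :: t)) ?orbT.
Qed.

End Independence.

(* What local colour number 2 forces, see [clustered_of_ncolors_out_le2]. *)
Definition clustered (T : Type) (adj o : rel T) :=
  forall v w u x y, o v u -> o w u -> o v x -> o w y -> ~~ adj x y.

Lemma clustered_out_independent (T : eqType) (adj o : rel T) s v :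
  clustered adj o -> independent adj (filter (o v) s).
Proof.
move=> cl; apply/independentP => x y.
by rewrite !mem_filter => /andP[ovx _] /andP[ovy _]; apply: (cl v v x).
Qed.

Lemma clustered_independent (T : eqType) (adj o : rel T) s v w u :
  clustered adj o -> o v u -> o w u ->
  independent adj (filter (o v) s ++ filter (o w) s).
Proof.
move=> cl ovu owu; apply/independentP => x y.
have src z : z \in filter (o v) s ++ filter (o w) s -> exists2 a, o a u & o a z.
  by rewrite mem_cat !mem_filter => /orP[/andP[? _] | /andP[? _]]; [exists v | exists w].
by move=> /src[a oau oax] /src[b obu oby]; apply: (cl a b u).
Qed.

Lemma clustered_size_out_le (T : eqType) (adj o : rel T) (vs : seq T) k v :
  clustered adj o -> {in vs, forall u, o v u -> adj v u} ->
  all (fun s => ~~ independent adj s) (ksubseqs k.+1 (filter (adj v) vs)) ->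
  size (filter (o v) vs) <= k.
Proof.
move=> cl out_adj /allP no_indep; rewrite leqNgt; apply/negP => gt_k.
pose t := take k.+1 (filter (o v) vs).
have sub_t : subseq t (filter (adj v) vs).
  apply: subseq_trans (take_subseq _ _) _; rewrite subseq_filter filter_subseq andbT.
  by apply/allP => u; rewrite mem_filter => /andP[ovu uin]; apply: out_adj.
have := no_indep t; rewrite -[X in ksubseqs X](size_takel gt_k) mem_ksubseqs // => /(_ isT).
by rewrite (independent_subseq (take_subseq _ _) (clustered_out_independent _ _ cl)).
Qed.

Section Search.
Variables (T : eqType) (adj : rel T) (vs : seq T) (k : nat).

Definition candidates v := [seq s <- ksubseqs k (filter (adj v) vs) | independent adj s].

Definition compatible '((v, s) : T * seq T) '((w, t) : T * seq T) :=
  (adj v w ==> ((w \in s) != (v \in t))) && (has (mem t) s ==> independent adj (s ++ t)).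

(* The
   [if] (rather than [&&]) keeps [vm_compute], which is call-by-value, from
   exploring inconsistent branches. *)
Fixpoint search (todo : seq T) (acc : seq (T * seq T)) : bool :=
  if todo is v :: todo' then
    has (fun s => if all (compatible (v, s)) acc then search todo' ((v, s) :: acc) else false)
      (candidates v)
  else true.

Lemma search_complete (o : rel T) :
  {in vs &, forall u v, o u v -> adj u v} ->
  {in vs &, forall u v, adj u v -> o u v (+) o v u} ->
  clustered adj o ->
  {in vs, forall v, size (filter (o v) vs) = k} ->
  search vs [::].
Proof.
move=> out_adj orient cl size_out; pose sol v := filter (o v) vs.
have cand v : v \in vs -> sol v \in candidates v.
  move=> vin; rewrite mem_filter clustered_out_independent // -(size_out v vin).
  apply: mem_ksubseqs; rewrite subseq_filter filter_subseq andbT.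
  by apply/allP => u; rewrite mem_filter => /andP[ovu uin]; apply: out_adj.
have compat v w : v \in vs -> w \in vs -> compatible (v, sol v) (w, sol w).
  move=> vin win /=; apply/andP; split.
    apply/implyP => avw; move: (orient v w vin win avw).
    by rewrite /sol !mem_filter vin win !andbT; case: (o v w); case: (o w v).
  apply/implyP => /hasP[u]; rewrite /sol mem_filter => /andP[ovu _].
  by rewrite inE mem_filter => /andP[owu _]; apply: clustered_independent ovu owu.
suff: forall todo done, {subset todo <= vs} -> {subset done <= vs} ->
    search todo [seq (w, sol w) | w <- done].
  by move=> /(_ vs [::]); apply.
elim=> [//|v todo IH] done /= todo_vs done_vs.
have vin : v \in vs by apply: todo_vs; rewrite mem_head.
apply/hasP; exists (sol v); first exact: cand.
rewrite (_ : all _ _ = true); last first.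
  by apply/allP => _ /mapP[w wdone ->]; apply: compat => //; apply: done_vs.
apply: (IH (v :: done)) => w; last by rewrite inE => /predU1P[-> // | /done_vs].
by move=> wtodo; apply: todo_vs; rewrite inE wtodo orbT.
Qed.
End Search.

Section RegularOrientation.
Variables (T : finType) (adj o : rel T).
Hypotheses (adj_sym : symmetric adj) (o_orient : is_orientation adj o).

Lemma card_out_in v : #|[pred u | o v u]| + #|[pred u | o u v]| = #|[pred u | adj v u]|.
Proof.
case: o_orient => out_adj orient; rewrite -cardUI.
rewrite (@eq_card _ [predI _ & _] pred0) => [|u]; last first.
  rewrite !inE; apply/negbTE/andP => -[ovu ouv].
  by move: (orient v u (out_adj v u ovu)); rewrite ovu ouv.
rewrite card0 addn0; apply: eq_card => u; rewrite !inE.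
have [avu|navu] := boolP (adj v u); first by move: (orient v u avu); case: (o v u).
apply/negbTE; rewrite negb_or.
by apply/andP; split; apply: contra navu => /out_adj; rewrite adj_sym.
Qed.

Lemma sum_card_out : \sum_v #|[pred u | o v u]| = \sum_v #|[pred u | o u v]|.
Proof.
have cardE' (p : pred T) : #|[pred u | p u]| = \sum_u (p u : nat).
  by rewrite -sum1_card big_mkcond; apply: eq_bigr => u _; rewrite inE; case: (p u).
under eq_bigr do rewrite cardE'; under [RHS]eq_bigr do rewrite cardE'.
exact: exchange_big.
Qed.

Lemma card_out_eq_of_regular k :
  (forall v, #|[pred u | adj v u]| = k.*2) -> (forall v, #|[pred u | o v u]| <= k) ->
  forall v, #|[pred u | o v u]| = k.
Proof.
move=> deg out_le.
have sum_out : \sum_v #|[pred u | o v u]| = \sum_(v : T) k.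
  apply: double_inj; rewrite -!addnn [X in _ + X = _]sum_card_out -!big_split /=.
  by apply: eq_bigr => v _; rewrite card_out_in deg addnn.
have /leqif_sum[_ /esym] := fun v (_ : true) => leqif_eq (out_le v).
by rewrite sum_out eqxx => /forall_inP h v; apply/eqP/h.
Qed.
End RegularOrientation.

Section LocalColours.
Variables (T : finType) (adj : rel T).

Lemma ncolors_out_le (o : rel T) (c : T -> nat) v (s : seq nat) :
  {in out_closed_nbhd o v, forall u, c u \in s} -> ncolors_out o c v <= size s.
Proof.
move=> cs; apply: uniq_leq_size (undup_uniq _) _ => b.
by rewrite mem_undup => /mapP[u]; rewrite mem_enum => /cs cus ->.
Qed.

Lemma out_colour_eq (o : rel T) (c : T -> nat) v x y :
  is_orientation adj o -> proper_coloring adj c -> ncolors_out o c v <= 2 ->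
  o v x -> o v y -> c x = c y.
Proof.
move=> [out_adj _] proper le2 ovx ovy; apply/eqP; apply: contraT => cxy.
have cvx : c v != c x by apply/eqP/proper/out_adj.
have cvy : c v != c y by apply/eqP/proper/out_adj.
have sub : {subset [:: c v; c x; c y] <= undup [seq c u | u <- enum (out_closed_nbhd o v)]}.
  move=> b; rewrite !inE => /or3P[] /eqP ->;
    by rewrite mem_undup map_f // mem_enum !inE ?eqxx ?ovx ?ovy ?orbT.
have := uniq_leq_size _ sub; rewrite /= !inE negb_or cvx cvy cxy => /(_ isT).
by move/leq_trans/(_ le2).
Qed.

Lemma clustered_of_ncolors_out_le2 (o : rel T) (c : T -> nat) :
  is_orientation adj o -> proper_coloring adj c -> (forall v, ncolors_out o c v <= 2) ->
  clustered adj o.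
Proof.
move=> orient proper le2 v w u x y ovu owu ovx owy; apply/negP => /proper.
rewrite (out_colour_eq orient proper (le2 v) ovx ovu).
by rewrite (out_colour_eq orient proper (le2 w) owu owy).
Qed.

Lemma ncolors_out_ge3 (o : rel T) (c : T -> nat) :
  is_orientation adj o -> proper_coloring adj c -> ~ clustered adj o ->
  exists v, 3 <= ncolors_out o c v.
Proof.
move=> orient proper not_cl; apply/existsP; apply: contraT; rewrite negb_exists.
move=> /forallP le2; case: not_cl; apply: clustered_of_ncolors_out_le2 orient proper _.
by move=> v; rewrite leqNgt le2.
Qed.

Definition colour_orientation (c : T -> nat) (t : rel nat) : rel T :=
  fun u v => adj u v && t (c u) (c v).

Lemma colour_orientationP (c : T -> nat) (t : rel nat) :
  symmetric adj -> (forall u v, adj u v -> t (c u) (c v) (+) t (c v) (c u)) ->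
  is_orientation adj (colour_orientation c t).
Proof.
move=> adj_sym tour; split=> [u v /andP[] // | u v auv].
by rewrite /colour_orientation auv adj_sym auv tour.
Qed.

Lemma ncolors_out_colour_orientation (c : T -> nat) (t : rel nat) v (s : seq nat) :
  (forall b, t (c v) b -> b \in s) ->
  ncolors_out (colour_orientation c t) c v <= (size s).+1.
Proof.
move=> ts; apply: (@ncolors_out_le _ _ _ (c v :: s)) => u.
by rewrite !inE => /predU1P[-> | /andP[_ /ts ->]]; rewrite ?eqxx ?orbT.
Qed.

Lemma psi_d_minP m :
  (exists o c, [/\ is_orientation adj o, proper_coloring adj c &
                   forall v, ncolors_out o c v <= m]) ->
  (forall o c, is_orientation adj o -> proper_coloring adj c ->
     exists v, m <= ncolors_out o c v) ->
  psi_d_min adj m.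
Proof.
move=> [o [c [orient proper le_m]]] ge_m; split.
  by exists o; split=> //; split=> [|c'/(ge_m o c' orient)]; first by exists c.
move=> o' m' orient' [[c' [proper' le_m']] _].
by have [v /leq_trans] := ge_m o' c' orient' proper'; apply.
Qed.
End LocalColours.

Section Pullback.
Variables (T T' : finType) (adj : rel T) (adj' : rel T') (f : T' -> T).
Hypothesis f_adj : forall i j, adj (f i) (f j) = adj' i j.

Lemma is_orientation_pullback o :
  is_orientation adj o -> is_orientation adj' (fun i j => o (f i) (f j)).
Proof.
by move=> [out_adj orient]; split=> i j; rewrite -f_adj; [apply: out_adj | apply: orient].
Qed.

Lemma clustered_pullback o : clustered adj o -> clustered adj' (fun i j => o (f i) (f j)).
Proof. by move=> cl v w u x y ovu owu ovx owy; rewrite -f_adj; apply: cl ovu owu ovx owy. Qed.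
End Pullback.

(* [enum 'I_n] does not reduce under [vm_compute] since [insub] matches on the
   opaque [idP]; [insub_eq] is its transparent twin. *)
Definition ord_list n : seq 'I_n := pmap (@insub_eq _ _ 'I_n) (iota 0 n).

Lemma ord_listE n : ord_list n = enum 'I_n.
Proof. by rewrite enumT unlock /= /ord_list; apply: eq_pmap; apply: insub_eqE. Qed.

Lemma card_predE (T : finType) (p : pred T) : #|[pred u | p u]| = size (filter p (enum T)).
Proof. by rewrite cardE enumT. Qed.

Definition kg_pairs : seq (nat * nat) :=
  [seq p <- [seq (a, b) | a <- iota 0 6, b <- iota 0 6] | p.1 < p.2].

Lemma kg_pairP p : p \in kg_pairs -> p.1 < p.2 < 6.
Proof.
rewrite mem_filter andbC => /andP[/allpairsP[[a b] [_ b6 ->]] /= ->].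
by move: b6; rewrite mem_iota.
Qed.

Definition kg_pair (i : 'I_15) : nat * nat := nth (0, 0) kg_pairs i.

Definition disjoint_pairs (p q : nat * nat) :=
  [&& p.1 != q.1, p.1 != q.2, p.2 != q.1 & p.2 != q.2].

Definition kg15_adj : rel 'I_15 := fun i j => disjoint_pairs (kg_pair i) (kg_pair j).

Lemma kg_pair_lt i : (kg_pair i).1 < (kg_pair i).2 < 6.
Proof. by apply/kg_pairP/mem_nth; exact: ltn_ord i. Qed.

Lemma inord_eq n (a b : nat) : a <= n -> b <= n -> (inord a == inord b :> 'I_n.+1) = (a == b).
Proof. by move=> a6 b6; rewrite -val_eqE /= !inordK. Qed.

Lemma disjoint_set2 (T : finType) (a b c d : T) :
  [disjoint [set a; b] & [set c; d]] = [&& a != c, a != d, b != c & b != d].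
Proof. by rewrite disjoints_subset subUset !sub1set !inE !negb_or !andbA. Qed.

Definition kg_set (p : nat * nat) : {set 'I_6} := [set inord p.1; inord p.2].

Lemma card_kg_set i : #|kg_set (kg_pair i)| == 2.
Proof.
have /andP[lt12 lt26] := kg_pair_lt i; have lt16 := ltn_trans lt12 lt26.
by rewrite cards2 inord_eq ?neq_ltn ?lt12.
Qed.

Definition kg_vertex (i : 'I_15) : KGvert 6 2 := exist _ (kg_set (kg_pair i)) (card_kg_set i).

Lemma KGadj_kg_vertex i j : KGadj (kg_vertex i) (kg_vertex j) = kg15_adj i j.
Proof.
have /andP[lt12 lt26] := kg_pair_lt i; have /andP[lt12' lt26'] := kg_pair_lt j.
have lt16 := ltn_trans lt12 lt26; have lt16' := ltn_trans lt12' lt26'.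
by rewrite /KGadj /= disjoint_set2 !inord_eq.
Qed.

Lemma KGadj_sym : symmetric (@KGadj 6 2).
Proof. by move=> u v; rewrite /KGadj disjoint_sym. Qed.

Lemma kg15_adj_sym : symmetric kg15_adj.
Proof. by move=> i j; rewrite -!KGadj_kg_vertex KGadj_sym. Qed.

Lemma kg15_degree v : #|[pred u | kg15_adj v u]| = 3.*2.
Proof.
have: all (fun v => size (filter (kg15_adj v) (enum 'I_15)) == 3.*2) (enum 'I_15).
  by rewrite -ord_listE; vm_compute.
by rewrite card_predE => /allP/(_ v); rewrite mem_enum => /(_ isT)/eqP.
Qed.

Lemma kg15_no_independent_4set :
  {in enum 'I_15, forall v,
     all (fun s => ~~ independent kg15_adj s) (ksubseqs 4 (filter (kg15_adj v) (enum 'I_15)))}.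
Proof. by apply/allP; rewrite -ord_listE; vm_compute. Qed.

Lemma kg15_search : search kg15_adj (enum 'I_15) 3 (enum 'I_15) [::] = false.
Proof. by rewrite -ord_listE; vm_compute. Qed.

Lemma kg15_no_clustered_orientation (o : rel 'I_15) :
  is_orientation kg15_adj o -> ~ clustered kg15_adj o.
Proof.
move=> orient cl; have [out_adj tour] := orient.
have out3 v : size (filter (o v) (enum 'I_15)) = 3.
  rewrite -card_predE; apply: (card_out_eq_of_regular kg15_adj_sym orient kg15_degree) => u.
  have uin : u \in enum 'I_15 by rewrite mem_enum.
  rewrite card_predE; apply: clustered_size_out_le cl _ (kg15_no_independent_4set uin).
  by move=> w _; apply: out_adj.
have := search_complete (fun u v _ _ => out_adj u v) (fun u v _ _ => tour u v) cl
  (fun v _ => out3 v).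
by rewrite kg15_search.
Qed.

Lemma KG62_no_clustered_orientation (o : rel (KGvert 6 2)) :
  is_orientation (@KGadj 6 2) o -> ~ clustered (@KGadj 6 2) o.
Proof.
move=> /(is_orientation_pullback KGadj_kg_vertex) orient.
move=> /(clustered_pullback KGadj_kg_vertex); exact: kg15_no_clustered_orientation.
Qed.

Definition kg_colour (v : KGvert 6 2) : nat :=
  find (fun k => [exists x in val v, val x == k]) (iota 0 3).

Lemma kg_colour_le3 (v : KGvert 6 2) : kg_colour v <= 3.
Proof. by rewrite -[3](size_iota 0) find_size. Qed.

Lemma kg_colour_leq (v : KGvert 6 2) (x : 'I_6) : x \in val v -> kg_colour v <= x.
Proof.
move=> xv; rewrite leqNgt; apply/negP => lt_x.
have x3 : x < 3 := leq_trans lt_x (kg_colour_le3 v).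
move: (before_find 0 lt_x); rewrite nth_iota //= => /negbT/negP; apply.
by apply/existsP; exists x; rewrite xv eqxx.
Qed.

Lemma mem_kg_colour (v : KGvert 6 2) :
  kg_colour v < 3 -> exists2 x : 'I_6, x \in val v & val x = kg_colour v.
Proof.
move=> lt3; have has_col : has (fun k => [exists x in val v, val x == k]) (iota 0 3).
  by rewrite has_find size_iota.
by have := nth_find 0 has_col; rewrite nth_iota // => /exists_inP[x xv /eqP]; exists x.
Qed.

Lemma kg_colour_proper : proper_coloring (@KGadj 6 2) kg_colour.
Proof.
move=> u v; rewrite /KGadj => disj same.
have [lt3 | ge3] := ltnP (kg_colour u) 3.
  have [x xu xk] := mem_kg_colour lt3; have [|y yv yk] := mem_kg_colour (v := v).
    by rewrite -same.
  have xy : x = y by apply: val_inj; rewrite xk yk same.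
  by move: (disjointFr disj xu); rewrite xy yv.
have ge3' : 3 <= kg_colour v by rewrite -same.
case/cards2P: (valP u) => a [b [ab uab]]; case/cards2P: (valP v) => c [d [cd vcd]].
have [a3 b3] : 3 <= a /\ 3 <= b.
  by split; apply: leq_trans ge3 (kg_colour_leq _); rewrite uab !inE eqxx ?orbT.
have [c3 d3] : 3 <= c /\ 3 <= d.
  by split; apply: leq_trans ge3' (kg_colour_leq _); rewrite vcd !inE eqxx ?orbT.
move: disj ab cd; rewrite uab vcd disjoint_set2 -!val_eqE /=.
have := ltn_ord a; have := ltn_ord b; have := ltn_ord c; have := ltn_ord d; lia.
Qed.

Definition tour4 : rel nat :=
  fun a b => (a, b) \in [:: (0, 1); (0, 2); (1, 2); (1, 3); (2, 3); (3, 0)].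

Lemma tour4_tournament a b : a <= 3 -> b <= 3 -> a != b -> tour4 a b (+) tour4 b a.
Proof. by move: a b => [|[|[|[|a]]]] [|[|[|[|b]]]]. Qed.

Lemma tour4_out a b : tour4 a b -> b \in [:: a.+1 %% 4; a.+2].
Proof. by move: a b => [|[|[|[|a]]]] [|[|[|[|b]]]]. Qed.

Theorem mainTheorem4 : psi_d_min (@KGadj 6 2) 3.
Proof.
apply: psi_d_minP; last first.
  move=> o c orient proper.
  exact: ncolors_out_ge3 orient proper (KG62_no_clustered_orientation orient).
exists (colour_orientation (@KGadj 6 2) kg_colour tour4), kg_colour; split.
- apply: colour_orientationP KGadj_sym _ => u v auv.
  by apply: tour4_tournament; rewrite ?kg_colour_le3 //; apply/eqP/(kg_colour_proper auv).
- exact: kg_colour_proper.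
- by move=> v; apply: ncolors_out_colour_orientation (@tour4_out _).
Qed.
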